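(* Let $\mathcal{G}^s$ be an SCG and consider the effect $P(y_t\mid \text{do}(x^1_{t-\gamma_1}),\dots,\text{do}(x^n_{t-\gamma_n}))$. The following are equivalent: 1. There exist an intervention $X^i_{t-\gamma_i}$ and a candidate FTCG $\mathcal{G}^f\in\mathcal{C}(\mathcal{G}^s)$ containing a directed path $X^i_{t-\gamma_i}\leftsquigarrow Y_t$ (from $Y_t$ to $X^i_{t-\gamma_i}$) which remains in $\mathcal{NC}\cup\{X^i_{t-\gamma_i}\}$. 2. There exists an intervention $X^i_{t-\gamma_i}$ with $\gamma_i=0$ and $X^i\in\text{Desc}(Y,\mathcal{G}^s_{|\mathcal{S}})$, where $\mathcal{S}:=\{S\in\mathcal{V}^s: t_{\mathcal{NC}}(S)\le t\}\cup\{X^j\in\mathcal{X}^s:\gamma_j=0\}$ and $\mathcal{G}^s_{|\mathcal{S}}$ is the subgraph of $\mathcal{G}^s$ induced by $\mathcal{S}$.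
   Context: Let $\mathcal{V}$ be a finite set of time series, $\mathcal{V}^f=\{X_s: X\in\mathcal{V},s\in\mathbb{Z}\}$. An FTCG is a DAG on $\mathcal{V}^f$ whose edges $X_s\to Z_{s'}$ satisfy $s\le s'$. The SCG reduced from an FTCG $\mathcal{G}^f$ is $\mathcal{G}^s=(\mathcal{V}^s,\mathcal{E}^s)$, $\mathcal{V}^s=\mathcal{V}$, with $X\to Z$ iff $\mathcal{G}^f$ has an edge $X_{s-\gamma}\to Z_s$ with $\gamma\ge0$. An SCG is a graph reduced from some FTCG; $\mathcal{C}(\mathcal{G}^s)$ is the class of candidate FTCGs (those from which $\mathcal{G}^s$ is reduced). Descendants are via directed paths (a vertex is its own descendant). A path from set $\mathbf{A}$ to $\mathbf{B}$ is proper if only its first vertex is in $\mathbf{A}$. A path remains in a set $S$ if all its vertices are in $S$. $\text{Forb}(\mathbf{X},\mathbf{Y},\mathcal{G})$ is the set of all descendants of any $W\notin\mathbf{X}$ lying on a proper directed path from $\mathbf{X}$ to $\mathbf{Y}$ in $\mathcal{G}$. Effect setup: fix $Y\in\mathcal{V}^s$, a time $t$, and interventions $X^1_{t-\gamma_1},\dots,X^n_{t-\gamma_n}$ (distinct vertices of $\mathcal{V}^f$), with standing assumptions $\gamma_i\ge0$ and $Y$ a descendant of every $X^i$ in $\mathcal{G}^s$. $\mathcal{X}^f=\{X^i_{t-\gamma_i}\}_i$, $\mathcal{X}^s=\{X^i\}_i$. $\mathcal{CF}=\bigcup_{\mathcal{G}^f\in\mathcal{C}(\mathcal{G}^s)}\text{Forb}(\mathcal{X}^f,Y_t,\mathcal{G}^f)$,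 $\mathcal{NC}=\mathcal{CF}\setminus\mathcal{X}^f$. For $F\in\mathcal{V}^s$, $t_{\mathcal{NC}}(F)=\min\{t_1:F_{t_1}\in\mathcal{NC}\}$ with $\min\emptyset=+\infty$. *)

From mathcomp Require Import all_boot all_order all_algebra.
Set Implicit Arguments. Unset Strict Implicit. Unset Printing Implicit Defensive.
Import Order.TTheory GRing.Theory Num.Theory.
Local Open Scope ring_scope.

(** Generic (possibly infinite) directed graphs given by a Prop-valued edge
    relation.  A directed walk starting at [x] is the vertex list [x :: p]. *)
Fixpoint epath {T : Type} (E : T -> T -> Prop) (x : T) (p : seq T) : Prop :=
  match p with
  | [::] => True
  | y :: p' => E x y /\ epath E y p'
  end.

(** Prop-valued list membership (no decidable equality needed) *)
Fixpoint inseq {T : Type} (u : T) (p : seq T) : Prop :=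
  match p with
  | [::] => False
  | y :: p' => u = y \/ inseq u p'
  end.

Definition dipath {T : Type} (E : T -> T -> Prop) (a b : T) (p : seq T) : Prop :=
  epath E a p /\ last a p = b.

Definition on_path {T : Type} (a : T) (p : seq T) (u : T) : Prop :=
  u = a \/ inseq u p.

Definition acyclic {T : Type} (E : T -> T -> Prop) : Prop :=
  forall x p, epath E x p -> last x p = x -> p = [::].

(** descendants (a vertex is its own descendant) *)
Definition desc {T : Type} (E : T -> T -> Prop) (a b : T) : Prop :=
  exists p, dipath E a b p.

Definition is_FTCG (V : Type) (E : V * int -> V * int -> Prop) : Prop :=
  (forall x y, E x y -> x.2 <= y.2) /\ acyclic E.

Definition reduced_SCG (V : Type) (E : V * int -> V * int -> Prop) : V -> V -> Prop :=
  fun X Z => exists (s gamma : int), 0 <= gamma /\ E (X, s - gamma) (Z, s).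

Definition candidate (V : Type) (Gs : V -> V -> Prop) (E : V * int -> V * int -> Prop) : Prop :=
  is_FTCG E /\ (forall X Z, Gs X Z <-> reduced_SCG E X Z).

Definition is_SCG (V : Type) (Gs : V -> V -> Prop) : Prop :=
  exists E, candidate Gs E.

Definition Forb {T : Type} (A : T -> Prop) (y : T) (E : T -> T -> Prop) (v : T) : Prop :=
  exists W, ~ A W /\
    exists a p, [/\ A a, dipath E a y p, (forall u, inseq u p -> ~ A u),
                    on_path a p W & desc E W v].

Definition induced {T : Type} (G : T -> T -> Prop) (P : T -> Prop) : T -> T -> Prop :=
  fun a b => [/\ P a, P b & G a b].

Section Effect.
Variables (V : Type) (Gs : V -> V -> Prop) (n : nat)
          (X : 'I_n -> V) (gamma : 'I_n -> int) (Y : V) (t : int).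

Definition Xf (v : V * int) : Prop := exists i, v = (X i, t - gamma i).

Definition CF (v : V * int) : Prop :=
  exists E, candidate Gs E /\ Forb Xf (Y, t) E v.

Definition NC (v : V * int) : Prop := CF v /\ ~ Xf v.

(** "t_NC(F) <= t'" where t_NC(F) = min {t1 : F_t1 \in NC} (min of empty = +oo) *)
Definition tNC_le (F : V) (t' : int) : Prop := exists t1, t1 <= t' /\ NC (F, t1).

Definition Sset (S : V) : Prop :=
  tNC_le S t \/ exists j, gamma j = 0 /\ S = X j.

End Effect.

(* Times never decrease along an FTCG path, so a path from Y_t to an
   intervention X^i_(t - gamma_i) lies in slice t and forces gamma_i = 0; its
   vertices other than X^i_t are in NC at time t, so their series are in S, and
   projecting the path gives a path of G^s restricted to S.  Conversely, cut a
   path of G^s restricted to S at its first intervened series of lag 0 and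
   lift it to slice t.  Candidate FTCGs are built from a ranking of the vertices:
   orienting every SCG edge lexicographically by (time, rank) is a candidate,
   and ranking by position in a list turns any simple compatible walks laid out
   in that list into paths.  The lifted path is one such walk; each of its
   earlier vertices lies in NC because Y is in S, so some vertex is forbidden,
   which provides a proper path from X^f to Y_t that can be glued to the
   lifted prefix. *)

From mathcomp Require Import all_boot all_order all_algebra.
From mathcomp Require Import zify.
Import Order.TTheory GRing.Theory Num.Theory.
Local Open Scope ring_scope.
Set Implicit Arguments. Unset Strict Implicit. Unset Printing Implicit Defensive.

Section Walks.
Variable T : Type.
Implicit Types (R : T -> T -> Prop) (x : T) (p : seq T).

Lemma epath_cat R x p q :
  epath R x (p ++ q) <-> epath R x p /\ epath R (last x p) q.
Proof.
elim: p x => [|y p IH] x /=; first by tauto.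
by rewrite IH; tauto.
Qed.

Lemma sub_epath R R' : (forall a b, R a b -> R' a b) ->
  forall x p, epath R x p -> epath R' x p.
Proof. by move=> RR' x p; elim: p x => [|y p IH] x //= [/RR' ? /IH]. Qed.

Lemma epath_map_in (U : Type) (f : T -> U) (P : T -> Prop) R (R' : U -> U -> Prop) x p :
  (forall a b, P a -> P b -> R a b -> R' (f a) (f b)) ->
  (forall u, on_path x p u -> P u) -> epath R x p -> epath R' (f x) (map f p).
Proof.
move=> hom; elim: p x => [|y p IH] x //= Pp [Rxy Rp]; split.
- by apply: hom Rxy; apply: Pp; [left | right; left].
- by apply: IH => // u hu; apply: Pp; right.
Qed.

Lemma epath_le_potential d (U : porderType d) (f : T -> U) R x p :
  (forall a b, R a b -> (f a <= f b)%O) -> epath R x p ->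
  forall u, on_path x p u -> (f x <= f u <= f (last x p))%O.
Proof.
move=> mono; elim: p x => [|y p IH] x /= hp u.
  by case=> [->|[]]; rewrite lexx.
case: hp => /mono fxy /IH hp; have /andP[_ fyl] := hp y (or_introl erefl).
case=> [->|/hp/andP[fyu ful]]; first by rewrite lexx (le_trans fxy).
by rewrite ful (le_trans fxy).
Qed.

Lemma acyclic_of_potential d (U : porderType d) (f : T -> U) R :
  (forall a b, R a b -> (f a < f b)%O) -> acyclic R.
Proof.
move=> incr x [//|y p] hp hl; exfalso.
suff: (f x < f (last x (y :: p)))%O by rewrite hl ltxx.
elim: p x y hp {hl} => [|z p IH] x y /= [hxy hp]; first exact: incr.
exact: lt_trans (incr _ _ hxy) (IH y z hp).
Qed.

End Walks.

Section EqWalks.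
Variable T : eqType.
Implicit Types (R : T -> T -> Prop) (x y : T) (p s : seq T).

Lemma inseqP x p : inseq x p <-> x \in p.
Proof.
elim: p => [|y p IH] //=; rewrite in_cons IH.
by split=> [[->|->]|/orP[/eqP|]]; rewrite ?eqxx ?orbT; auto.
Qed.

Lemma path_zip x p : path (fun a b => (a, b) \in zip (x :: p) p) x p.
Proof.
elim: p x => //= y p IH x; rewrite mem_head /=.
by apply: sub_path (IH y) => a b ab; rewrite in_cons ab orbT.
Qed.

Lemma epath_zip R x p : epath R x p -> forall a b, (a, b) \in zip (x :: p) p -> R a b.
Proof.
elim: p x => //= y p IH x [Rxy hp] a b.
by rewrite in_cons => /orP[/eqP[-> ->] //|/IH]; apply.
Qed.

Lemma epath_of_path (e : rel T) R x p :
  (forall a b, e a b -> R a b) -> path e x p -> epath R x p.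
Proof. by move=> eR; elim: p x => //= y p IH x /andP[/eR ? /IH]. Qed.

Lemma dipath_shorten R a b p : dipath R a b p ->
  exists q, [/\ dipath R a b q, uniq (a :: q) & {subset q <= p}].
Proof.
move=> [hp <-]; case: (shortenP (path_zip a p)) => q hq uq sq.
by exists q; split => //; split => //; apply: epath_of_path hq; apply: epath_zip.
Qed.

Lemma dipath_suffix R x b p s1 y s2 :
  x :: p = s1 ++ y :: s2 -> dipath R x b p -> dipath R y b s2.
Proof.
move=> ep [hp <-]; rewrite -(last_cons x x) ep last_cat /=; split=> //.
case: s1 ep => [[xy <-] |z s1 [_ ep]]; first by rewrite -xy.
by move: hp; rewrite ep => /epath_cat[_ []].
Qed.

Lemma split_last_hit (A : pred T) s : has A s ->
  exists s1 y s2, [/\ s = s1 ++ y :: s2, A y & ~~ has A s2].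
Proof.
rewrite -has_rev -{2}(revK s); case/split_find => y s1 s2 Ay nAs1.
by exists (rev s2), y, (rev s1); rewrite rev_cat rev_rcons has_rev -cat1s catA cats1.
Qed.

Lemma sorted_index s :
  uniq s -> sorted (fun x y => index x s < index y s)%N s.
Proof.
move=> us; suff e : map (index^~ s) s = iota 0 (size s).
  by have := iota_ltn_sorted 0 (size s); rewrite -e sorted_map.
case: s us => // x0 s us; apply: (@eq_from_nth _ 0%N).
  by rewrite size_map size_iota.
by rewrite size_map => i lti; rewrite (nth_map x0) // nth_iota // index_uniq.
Qed.

End EqWalks.

Definition compatible_edge (V : Type) (Gs : V -> V -> Prop) (x y : V * int) : Prop :=
  Gs x.1 y.1 /\ x.2 <= y.2.

Lemma candidate_edge V Gs (E : V * int -> V * int -> Prop) x y :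
  candidate Gs E -> E x y -> compatible_edge Gs x y.
Proof.
move=> [[mono _] reduced] Exy; split; last exact: mono.
apply/reduced; exists y.2, (y.2 - x.2); split; first by have := mono _ _ Exy; lia.
by rewrite opprB addrC subrK; case: x Exy; case: y.
Qed.

Definition rank_FTCG (V : Type) (Gs : V -> V -> Prop) (r : V * int -> nat)
    (x y : V * int) : Prop :=
  Gs x.1 y.1 /\ ((x.2, r x) < (y.2, r y) :> (int *l nat))%O.

Lemma rank_FTCG_candidate V Gs r : candidate Gs (@rank_FTCG V Gs r).
Proof.
split; first split.
- by move=> x y [_]; rewrite ltxi_pair => /andP[].
- apply: (@acyclic_of_potential _ _ (int *l nat) (fun x => (x.2, r x))).
  by move=> x y [].
- move=> A B; split=> [AB|[s [g [_ []]]] //].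
  by exists 1, 1; split=> //; split=> //; rewrite ltxi_pair subrr.
Qed.

Lemma rank_FTCG_path (V : eqType) Gs (L : seq (V * int)) x p :
  uniq L -> subseq (x :: p) L -> epath (compatible_edge Gs) x p ->
  epath (rank_FTCG Gs (index^~ L)) x p.
Proof.
move=> uL sub.
have /= := subseq_sorted (fun _ _ _ => @ltn_trans _ _ _) sub (sorted_index uL).
elim: p x {sub} => //= y p IH x /andP[ixy hp] [[Gxy txy] cp].
split; last exact: IH.
by split=> //; rewrite ltxi_pair txy /=; apply/implyP.
Qed.

Lemma epath_at_time (V : Type) (Gs : V -> V -> Prop) (t : int) x s :
  epath Gs x s -> epath (compatible_edge Gs) (x, t) (map (fun v => (v, t)) s).
Proof. by apply: (epath_map_in (P := fun=> True)) => // ? ? _ _. Qed.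

Section Effect.
Variables (V : eqType) (Gs : V -> V -> Prop) (n : nat)
          (X : 'I_n -> V) (gamma : 'I_n -> int) (Y : V) (t : int).

Local Notation Xf := (Xf X gamma t).
Local Notation CF := (CF Gs X gamma Y t).
Local Notation NC := (NC Gs X gamma Y t).
Local Notation S := (Sset Gs X gamma Y t).
Local Notation at_t := (fun v : V => (v, t)).

Definition Xlag0 : pred V := [pred v | [exists j, (gamma j == 0) && (v == X j)]].

Lemma Xf_lag0 v : Xf (v, t) -> Xlag0 v.
Proof.
case=> j [-> /eqP]; rewrite -subr_eq0 opprB addrC subrK => /eqP gj.
by apply/existsP; exists j; rewrite gj !eqxx.
Qed.

Lemma NC_path_desc_S i E p : 0 <= gamma i ->
  candidate Gs E -> dipath E (Y, t) (X i, t - gamma i) p ->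
  (forall u, on_path (Y, t) p u -> NC u \/ u = (X i, t - gamma i)) ->
  gamma i = 0 /\ desc (induced Gs S) Y (X i).
Proof.
move=> gi_ge0 hE [hp hl] hNC.
have time u : on_path (Y, t) p u -> t <= u.2 <= t - gamma i.
  move=> hu; rewrite -[t - _]/((X i, t - gamma i).2) -hl.
  exact: (epath_le_potential (fun a b ab => (candidate_edge hE ab).2) hp hu).
have gi0 : gamma i = 0 by have := time _ (or_introl erefl); rewrite /=; lia.
split=> //; exists (map fst p); split; last by rewrite -[Y]/((Y, t).1) last_map hl.
apply: (epath_map_in (P := fun u => S u.1)) hp.
  by move=> a b Sa Sb /(candidate_edge hE) [].
move=> u hu; case: (hNC u hu) => [NCu|->]; last by right; exists i.
left; exists u.2; split; last by case: u {hu} NCu.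
by have := time u hu; rewrite gi0 subr0 => /andP[].
Qed.

Lemma CF_walk_from_Yt w0 u q : CF w0 ->
  dipath (compatible_edge Gs) (Y, t) u q -> uniq ((Y, t) :: q) ->
  (forall w, w \in (Y, t) :: q -> ~ Xf w) -> CF u.
Proof.
move=> [E0 [hE0 [_ [_ [a [P [Xa hP proper _ _]]]]]]] hq uq nXq.
have [P' [[hP' lP'] uP' sP']] := dipath_shorten hP.
(* Leaving (a :: P') for the last time keeps the two pieces disjoint. *)
have /split_last_hit [c1 [y [d [eq yP' dP']]]] : has (mem (a :: P')) ((Y, t) :: q).
  apply/hasP; exists (Y, t); first exact: mem_head.
  by have := mem_last a P'; rewrite lP'.
have {}yP' : y \in a :: P' := yP'.
have [hd ld] := dipath_suffix eq hq.
pose L := (a :: P') ++ d.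
have uL : uniq L.
  rewrite cat_uniq uP' /= (negbTE dP') /=.
  by move: uq; rewrite eq cat_uniq => /and3P[_ _ /andP[]].
exists (rank_FTCG Gs (index^~ L)); split; first exact: rank_FTCG_candidate.
exists y; split; first by apply: nXq; rewrite eq mem_cat mem_head orbT.
exists a, P'; split=> //.
- split=> //; apply: rank_FTCG_path uL (prefix_subseq _ _) _.
  by apply: (sub_epath _ hP') => ? ?; apply: candidate_edge.
- by move=> w /inseqP /sP' /inseqP; apply: proper.
- by move: yP'; rewrite in_cons => /orP[/eqP|/inseqP]; [left|right].
- exists d; split=> //; apply: rank_FTCG_path uL _ hd.
  by rewrite -cat1s /L; apply: cat_subseq; rewrite ?sub1seq ?subseq_refl.
Qed.

Lemma NC_on_walk ds v : tNC_le Gs X gamma Y t Y t ->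
  epath Gs Y ds -> uniq (Y :: ds) -> ~~ has Xlag0 (Y :: ds) ->
  v \in Y :: ds -> NC (v, t).
Proof.
move=> [t1 [_ [CFY _]]] hds uds nQ vds.
split; last by move/Xf_lag0; apply/negP; apply: (hasPn nQ).
case/splitPl: vds hds uds nQ => ds1 ds2 <- hds uds nQ.
have inj_at_t : injective at_t by move=> ? ? [].
apply: (CF_walk_from_Yt CFY (q := map at_t ds1)).
- split; last by rewrite -[(Y, t)]/(at_t Y) last_map.
  by apply: epath_at_time; case/epath_cat: hds.
- rewrite -[_ :: _]/(map at_t (Y :: ds1)) map_inj_uniq //.
  by move: uds; rewrite -cat_cons cat_uniq => /andP[].
- move=> w; rewrite -[_ :: _]/(map at_t (Y :: ds1)) => /mapP[w' wds1 ->].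
  by move/Xf_lag0; apply/negP; apply: (hasPn nQ); rewrite -cat_cons mem_cat wds1.
Qed.

Lemma S_walk_to_lag0 i : gamma i = 0 -> ~~ Xlag0 Y ->
  desc (induced Gs S) Y (X i) ->
  tNC_le Gs X gamma Y t Y t /\
  exists j ds, [/\ gamma j = 0, epath Gs Y (rcons ds (X j)),
                   uniq (Y :: rcons ds (X j)) & ~~ has Xlag0 (Y :: ds)].
Proof.
move=> gi nQY [p0 hp0].
have [p [[hp lp] up _]] := dipath_shorten hp0.
have hasQ : has Xlag0 p.
  apply/hasP; exists (X i); last by apply/existsP; exists i; rewrite gi !eqxx.
  move: (mem_last Y p); rewrite lp in_cons => /orP[/eqP XY|//].
  by move: nQY; rewrite -XY; case/negP; apply/existsP; exists i; rewrite gi !eqxx.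
case/split_find: hasQ hp up {lp} => z ds r /existsP[j /andP[/eqP gj /eqP ->]] nQds.
case/epath_cat => hS _; rewrite -cat_cons cat_uniq => /andP[uds _].
split.
  have : S Y by case: ds hS {nQds uds} => [|? ?] [[]].
  case=> // -[k [gk YX]]; move: nQY; rewrite YX; case/negP.
  by apply/existsP; exists k; rewrite gk !eqxx.
by exists j, ds; split=> //=; [apply: sub_epath hS => ? ? [] | rewrite negb_or nQY].
Qed.

Lemma desc_S_NC_path i : gamma i = 0 -> desc (induced Gs S) Y (X i) ->
  exists j E p,
    [/\ candidate Gs E,
        dipath E (Y, t) (X j, t - gamma j) p &
        forall u, on_path (Y, t) p u -> NC u \/ u = (X j, t - gamma j)].
Proof.
move=> gi hd.
have [/existsP[j /andP[/eqP gj /eqP YX]]|nQY] := boolP (Xlag0 Y).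
  exists j, (rank_FTCG Gs (fun=> 0%N)), [::]; rewrite gj subr0 -YX.
  by split=> [||u [->|[]]]; [apply: rank_FTCG_candidate | | right].
have [tY [j [ds [gj hGs uds nQ]]]] := S_walk_to_lag0 gi nQY hd.
have inj_at_t : injective at_t by move=> ? ? [].
exists j, (rank_FTCG Gs (index^~ (map at_t (Y :: rcons ds (X j))))).
exists (map at_t (rcons ds (X j))); split; first exact: rank_FTCG_candidate.
- split; last by rewrite -[(Y, t)]/(at_t Y) last_map last_rcons gj subr0.
  apply: rank_FTCG_path (subseq_refl _) (epath_at_time _ hGs).
  by rewrite -[_ :: _]/(map at_t (Y :: rcons ds (X j))) map_inj_uniq.
- move=> u hu; have /mapP[v vYdX ->] : u \in map at_t (Y :: rcons ds (X j)).
    by case: hu => [->|/inseqP uq]; rewrite /= in_cons ?uq ?eqxx ?orbT.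
  have [->|vX] := eqVneq v (X j); first by right; rewrite gj subr0.
  left; apply: NC_on_walk tY _ _ nQ _.
  - by move: hGs; rewrite -cats1 => /epath_cat[].
  - by move: uds; rewrite -rcons_cons rcons_uniq => /andP[].
  - by move: vYdX; rewrite -rcons_cons mem_rcons in_cons (negbTE vX).
Qed.

End Effect.

Theorem lemma2 (V : finType) (Gs : V -> V -> Prop) (n : nat)
    (X : 'I_n -> V) (gamma : 'I_n -> int) (Y : V) (t : int) :
  is_SCG Gs ->
  injective (fun i : 'I_n => (X i, t - gamma i)) ->
  (forall i, 0 <= gamma i) ->
  (forall i, desc Gs (X i) Y) ->
  ((exists i E p,
      [/\ candidate Gs E,
          dipath E (Y, t) (X i, t - gamma i) p &
          forall u, on_path (Y, t) p u ->
            NC Gs X gamma Y t u \/ u = (X i, t - gamma i)])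
   <->
   (exists i, gamma i = 0 /\
      desc (induced Gs (Sset Gs X gamma Y t)) Y (X i))).
Proof.
(* Every relation is an SCG by [rank_FTCG_candidate]. *)
move=> _ _ gamma_ge0 _; split.
- case=> i [E [p [hE hp hNC]]]; exists i.
  exact: NC_path_desc_S (gamma_ge0 i) hE hp hNC.
- by case=> i [gi hd]; apply: desc_S_NC_path gi hd.
Qed.
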